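(* Let $K$ be a compact Hausdorff space and $F$ a closed subset of $K$. If $K$ satisfies the countable chain condition and $F$ admits an extension operator in $K$, then $F$ satisfies the countable chain condition.
   Context: A topological space satisfies the countable chain condition (ccc) if every family of pairwise disjoint nonempty open subsets is countable. $C(K)$ is the Banach space of real-valued continuous functions on $K$ with the supremum norm. An extension operator for $F$ in $K$ is a bounded linear map $E:C(F)\to C(K)$ with $E(f)|_F=f$ for all $f\in C(F)$. *)

From HB Require Import structures.
From mathcomp Require Import all_boot all_order all_algebra.
From mathcomp Require Import all_classical all_reals all_analysis.
Set Implicit Arguments. Unset Strict Implicit. Unset Printing Implicit Defensive.
Import Order.TTheory GRing.Theory Num.Theory.
Import numFieldNormedType.Exports.
Local Open Scope classical_set_scope.
Local Open Scope ring_scope.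

Definition rel_open {T : topologicalType} (A U : set T) : Prop :=
  exists V : set T, open V /\ U = V `&` A.

Definition ccc_on {T : topologicalType} (A : set T) : Prop :=
  forall UU : set (set T),
    (forall U, UU U -> rel_open A U) ->
    (forall U, UU U -> U !=set0) ->
    (forall U V, UU U -> UU V -> U <> V -> U `&` V = set0) ->
    countable UU.

(* C(F) is represented by the functions K -> R that are continuous on the
   subspace F (values outside F are irrelevant). *)
Definition CF {R : realType} {K : topologicalType} (F : set K) (f : K -> R) :=
  {within F, continuous f}.

Definition extension_operator {R : realType} {K : topologicalType}
    (F : set K) (E : (K -> R) -> (K -> R)) : Prop :=
  [/\ (forall f g, CF F f -> CF F g -> {in F, f =1 g} -> E f = E g),
      (forall f, CF F f -> continuous (E f)),
      (forall (a : R) f g, CF F f -> CF F g ->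
          E (fun x => a * f x + g x) = (fun x => a * E f x + E g x)),
      (exists M : R, forall f (c : R), CF F f ->
          (forall y, F y -> `|f y| <= c) -> forall x, `|E f x| <= M * c) &
      (forall f, CF F f -> forall x, F x -> E f x = f x)].

From mathcomp Require Import all_boot all_order all_algebra.
From mathcomp Require Import all_classical all_reals all_analysis.
From mathcomp Require Import lra.
Set Implicit Arguments.
Unset Strict Implicit.
Unset Printing Implicit Defensive.
Import Order.TTheory GRing.Theory Num.Theory.
Import numFieldNormedType.Exports.
Local Open Scope classical_set_scope.
Local Open Scope ring_scope.

(* For every member U of a disjoint family of nonempty relatively open subsets
   of F, Urysohn's lemma gives a bump g_U : K -> [0,1] peaking at a point of U
   and vanishing on F \ U.  The sets {E g_U > 1/2} are nonempty and open in K.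
   On F the g_U have disjoint supports, so every finite sum of them is bounded
   by 1 there; boundedness of E then shows that no point of K lies in more
   than 2 ||E|| of these sets.  Finally, in a ccc space a family of nonempty
   open sets of bounded order is countable: the intersections of its maximal
   subfamilies with a common point are pairwise disjoint open sets, and each
   of them accounts for finitely many members. *)

Section BoundedOrderFamily.
Variables (T : topologicalType) (A : eqType) (I : set A) (W : A -> set T).
Variable N : nat.
Hypothesis cccT : ccc_on [set: T].
Hypothesis W_open : forall i, I i -> open (W i).
Hypothesis W_neq0 : forall i, I i -> W i !=set0.
Hypothesis W_bounded_order : forall x (s : seq A), uniq s ->
  (forall i, i \in s -> I i /\ W i x) -> (size s < N)%N.

Definition subfamily_cap (s : seq A) : set T :=
  [set x | forall i, i \in s -> W i x].

Definition maximal_subfamily (s : seq A) := [/\ forall i, i \in s -> I i,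
  subfamily_cap s !=set0 &
  forall y i, subfamily_cap s y -> I i -> W i y -> i \in s].

Lemma subfamily_cap_open s :
  (forall i, i \in s -> I i) -> open (subfamily_cap s).
Proof.
elim: s => [_|a s IH sI].
  have -> : subfamily_cap [::] = setT by apply/seteqP; split => // x _ i.
  exact: openT.
have -> : subfamily_cap (a :: s) = W a `&` subfamily_cap s.
  apply/seteqP; split => x /=.
    by move=> Wx; split => [|i si]; apply: Wx; rewrite inE ?eqxx ?si ?orbT.
  by move=> [Wax Wsx] i; rewrite inE => /predU1P [->|/Wsx].
apply: openI; first by apply/W_open/sI; rewrite mem_head.
by apply: IH => i si; apply: sI; rewrite inE si orbT.
Qed.

Lemma maximal_subfamily_cap_eq s t :
  maximal_subfamily s -> maximal_subfamily t ->
  subfamily_cap s `&` subfamily_cap t !=set0 ->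
  subfamily_cap s = subfamily_cap t.
Proof.
move=> [sI _ smax] [tI _ tmax] [y [sy ty]].
have st : s =i t.
  move=> i; apply/idP/idP => [si|ti].
    exact: tmax ty (sI i si) (sy i si).
  exact: smax sy (tI i ti) (ty i ti).
by apply/seteqP; split => x /= xW i; [rewrite -st|rewrite st]; exact: xW.
Qed.

Lemma exists_maximal_subfamily i :
  I i -> exists2 s, maximal_subfamily s & i \in s.
Proof.
move=> Ii.
pose P n := `[< exists s, [/\ uniq s, i \in s, forall j, j \in s -> I j,
  subfamily_cap s !=set0 & size s = n] >].
have P1 : exists n, P n.
  have [x Wx] := W_neq0 Ii.
  exists 1%N; apply/asboolP; exists [:: i]; split => //=.
  - by rewrite mem_head.
  - by move=> j; rewrite inE => /eqP ->.
  - by exists x => j; rewrite inE => /eqP ->.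
have Pbound n : P n -> (n <= N)%N.
  move=> /asboolP [s [us _ sI [x sx] <-]].
  apply: ltnW; apply: (W_bounded_order us) => j sj.
  by split; [apply: sI|apply: sx].
case: (ex_maxnP P1 Pbound) => n /asboolP [s [us si sI sne <-]] smax.
exists s => //; split => // y j sy Ij Wj; apply: contraT => js.
have : P (size (j :: s)).
  apply/asboolP; exists (j :: s); split => //=; first by rewrite js.
  - by rewrite inE si orbT.
  - by move=> k; rewrite inE => /predU1P [->|/sI].
  - by exists y => k; rewrite inE => /predU1P [->|/sy].
by move/smax; rewrite ltnn.
Qed.

Lemma maximal_subfamily_index_sub s : maximal_subfamily s ->
  [set i | I i /\ subfamily_cap s `<=` W i] `<=` [set` s].
Proof. by move=> [_ [y sy] smax] i [Ii sW]; exact: smax sy Ii (sW y sy). Qed.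

Lemma bounded_order_countable : countable I.
Proof.
have ccaps : countable (subfamily_cap @` maximal_subfamily).
  apply: cccT.
  - move=> _ [s [sI _ _] <-].
    exists (subfamily_cap s); split; last by rewrite setIT.
    exact: subfamily_cap_open.
  - by move=> _ [s [_ sne _] <-].
  - move=> _ _ [s ms <-] [t mt <-] neq; apply/eqP.
    by apply: (contra_notT _ neq) => /set0P; exact: maximal_subfamily_cap_eq.
have cover : I `<=` \bigcup_(Z in subfamily_cap @` maximal_subfamily)
                      [set i | I i /\ Z `<=` W i].
  move=> i Ii; have [s ms si] := exists_maximal_subfamily Ii.
  by exists (subfamily_cap s); [exists s|split => // x; apply].
apply: sub_countable (subset_card_le cover) _.
apply: bigcup_countable ccaps _ => _ [s ms <-].
apply: sub_countable (subset_card_le (maximal_subfamily_index_sub ms)) _.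
exact/finite_set_countable/finite_seq.
Qed.

End BoundedOrderFamily.

Lemma compact_hausdorff_bump (R : realType) (K : topologicalType)
    (V : set K) (p : K) :
  hausdorff_space K -> compact [set: K] -> open V -> V p ->
  exists g : K -> R, [/\ continuous g, forall x, 0 <= g x <= 1, g p = 1 &
     forall x, ~ V x -> g x = 0].
Proof.
move=> hK cK oV Vp.
have := @normal_completely_regular R K (compact_normal hK cK)
  (hausdorff_accessible hK) p (~` V) (open_closedC oV) (fun h => h Vp).
move=> /(@uniform_separatorP K R) [f [cf f01 fp fV]].
exists (fun x => 1 - f x); split.
- by move=> x; apply: continuousB; [exact: cst_continuous|exact: cf].
- move=> x; have := f01 (f x) (ex_intro2 _ _ x I erefl).
  by rewrite /= in_itv /= => /andP [h1 h2]; apply/andP; split; lra.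
- by rewrite (fp (f p) (ex_intro2 _ _ p erefl erefl)) subr0.
- by move=> x nVx; rewrite (fV (f x) (ex_intro2 _ _ x nVx erefl)) subrr.
Qed.

Lemma rel_open_bump_family (R : realType) (K : topologicalType)
    (F : set K) (UU : set (set K)) :
  hausdorff_space K -> compact [set: K] ->
  (forall U, UU U -> rel_open F U) -> (forall U, UU U -> U !=set0) ->
  exists g : set K -> K -> R, forall U, UU U ->
    [/\ continuous (g U), forall x, 0 <= g U x <= 1,
        exists2 p, F p & g U p = 1 & forall x, F x -> g U x != 0 -> U x].
Proof.
move=> hK cK UUo UUn.
pose bump U (g : K -> R) := UU U -> [/\ continuous g, forall x, 0 <= g x <= 1,
  exists2 p, F p & g p = 1 & forall x, F x -> g x != 0 -> U x].
suff /choice [g gP] : forall U, exists g, bump U g by exists g.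
move=> U.
have [UUU|nUU] := pselect (UU U); last by exists (fun=> 0) => /nUU.
have [V [oV UV]] := UUo U UUU; subst U; have [p [Vp Fp]] := UUn _ UUU.
have [g [cg g01 gp gV]] := compact_hausdorff_bump R hK cK oV Vp.
exists g => _; split => //; first by exists p.
move=> x Fx /eqP gx; split => //.
by apply: contrapT => nVx; exact/gx/gV.
Qed.

Lemma CF_sum (R : realType) (K : topologicalType) (F : set K) (A : eqType)
    (s : seq A) (g : A -> K -> R) :
  (forall i, i \in s -> CF F (g i)) -> CF F (fun x => \sum_(i <- s) g i x).
Proof.
elim: s => [_|a s IH gF].
  under eq_fun do rewrite big_nil.
  exact: cst_continuous.
under eq_fun do rewrite big_cons.
move=> x; apply: continuousD; first by apply: gF; rewrite mem_head.
by apply: IH => i si; apply: gF; rewrite inE si orbT.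
Qed.

Lemma sum_disjoint_support_le1 (R : numDomainType) (A : eqType) (s : seq A)
    (a : A -> R) : uniq s ->
  (forall i, i \in s -> 0 <= a i <= 1) ->
  (forall i j, i \in s -> j \in s -> a i != 0 -> a j != 0 -> i = j) ->
  0 <= \sum_(i <- s) a i <= 1.
Proof.
move=> us a01 supp; case: (boolP (has (fun i => a i != 0) s)).
  move=> /hasP [i si ai0]; rewrite (bigD1_seq i) //= big1_seq ?addr0.
    exact: a01.
  move=> j /andP [ji sj]; apply/eqP; apply: contraTT ji => aj0.
  by rewrite negbK (supp j i).
move=> /hasPn a0; rewrite big1_seq ?lexx ?ler01 // => i /andP [_ si].
by apply/eqP; move: (a0 i si); rewrite negbK.
Qed.

Lemma sum_ge_size (R : numDomainType) (A : eqType) (s : seq A) (a : A -> R)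
    (c : R) :
  (forall i, i \in s -> c <= a i) -> c *+ size s <= \sum_(i <- s) a i.
Proof.
move=> ca; have -> : c *+ size s = \sum_(i <- s) c.
  by rewrite big_const_seq count_predT iter_addr_0.
by rewrite big_seq [leRHS]big_seq; exact: ler_sum.
Qed.

Section ExtensionOperator.
Variables (R : realType) (K : topologicalType) (F : set K).
Variables (E : (K -> R) -> K -> R) (M : R).
Hypothesis E_linear : forall (a : R) f g, CF F f -> CF F g ->
  E (fun x => a * f x + g x) = (fun x => a * E f x + E g x).
Hypothesis E_bounded : forall f (c : R), CF F f ->
  (forall y, F y -> `|f y| <= c) -> forall x, `|E f x| <= M * c.

Lemma ext_op0 : E (fun=> 0) = (fun=> 0).
Proof.
apply/funext => x; apply/eqP; rewrite -normr_le0 -[leRHS](mulr0 M).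
by apply: E_bounded => [|y _]; [exact: cst_continuous|rewrite normr0].
Qed.

Lemma ext_op_sum (A : eqType) (s : seq A) (g : A -> K -> R) :
  (forall i, i \in s -> CF F (g i)) ->
  E (fun x => \sum_(i <- s) g i x) = (fun x => \sum_(i <- s) E (g i) x).
Proof.
elim: s => [_|a s IH gF].
  under eq_fun do rewrite big_nil.
  by rewrite ext_op0; under [RHS]eq_fun do rewrite big_nil.
have sF i : i \in s -> CF F (g i) by move=> si; apply: gF; rewrite inE si orbT.
have -> : (fun x => \sum_(i <- a :: s) g i x) =
          (fun x => 1 * g a x + \sum_(i <- s) g i x).
  by apply/funext => x; rewrite big_cons mul1r.
rewrite E_linear ?IH //; last exact: CF_sum.
  by apply/funext => x; rewrite big_cons mul1r.
by apply: gF; rewrite mem_head.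
Qed.

Lemma ext_op_order_bound (A : eqType) (s : seq A) (g : A -> K -> R) x :
  uniq s -> (forall i, i \in s -> CF F (g i)) ->
  (forall i y, i \in s -> F y -> 0 <= g i y <= 1) ->
  (forall i j y, i \in s -> j \in s -> F y ->
     g i y != 0 -> g j y != 0 -> i = j) ->
  (forall i, i \in s -> 1 / 2 < E (g i) x) -> (size s)%:R <= 2 * M.
Proof.
move=> us gF g01 supp Egx.
have sum_le : \sum_(i <- s) E (g i) x <= M.
  have -> : \sum_(i <- s) E (g i) x = E (fun y => \sum_(i <- s) g i y) x.
    by rewrite ext_op_sum.
  apply: le_trans (ler_norm _) _.
  rewrite -[leRHS]mulr1; apply: E_bounded => [|y Fy]; first exact: CF_sum.
  have /andP [sum0 sum1] := sum_disjoint_support_le1 us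
    (fun i si => g01 i y si Fy) (fun i j si sj => supp i j y si sj Fy).
  by rewrite ger0_norm.
have := sum_ge_size (fun i si => ltW (Egx i si)).
rewrite -mulr_natr; lra.
Qed.

End ExtensionOperator.

Theorem proposition3p15 (R : realType) (K : topologicalType) (F : set K) :
  hausdorff_space K -> compact [set: K] -> closed F ->
  ccc_on [set: K] ->
  (exists E : (K -> R) -> (K -> R), extension_operator F E) ->
  ccc_on F.
Proof.
move=> hK cK _ cccK [E [_ Ec Elin [M Ebd] Eext]] UU UUo UUn UUd.
have [g gP] := rel_open_bump_family R hK cK UUo UUn.
have gF U : UU U -> CF F (g U).
  by move=> /gP [cg _ _ _]; exact: continuous_subspaceT.
apply: (bounded_order_countable (W := fun U => [set x | 1 / 2 < E (g U) x])
  (N := (Num.truncn (2 * M)).+1) cccK).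
- move=> U UUU; apply: (@open_comp _ _ (E (g U)) [set y | 1 / 2 < y]).
    by move=> x _; exact: Ec (gF U UUU) x.
  exact: open_gt.
- move=> U UUU; have [_ _ [p Fp gp] _] := gP U UUU.
  by exists p; rewrite /= Eext ?gp //; [lra|exact: gF].
- move=> x s us sW; rewrite -(ltr_nat R); apply: le_lt_trans (truncnS_gt _).
  apply: (ext_op_order_bound (g := g) (x := x) Elin Ebd us).
  + by move=> U /sW [/gF].
  + by move=> U y /sW [/gP [_ g01 _ _] _] _; exact: g01.
  + move=> U V y /sW [UUU _] /sW [UUV _] Fy gU0 gV0; apply: contrapT => UV.
    have [[_ _ _ Usupp] [_ _ _ Vsupp]] := (gP U UUU, gP V UUV).
    have /seteqP [UV0 _] := UUd U V UUU UUV UV.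
    exact: UV0 y (conj (Usupp y Fy gU0) (Vsupp y Fy gV0)).
  + by move=> U /sW [].
Qed.
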